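(* Let $L$ be an $\omega$-regular language that is tDCW-positive. Then every two nice tDCWs $\mathcal{A}_1,\mathcal{A}_2$ recognizing $L$ that are minimal (no tDCW recognizing $L$ has fewer states) are safe isomorphic.
   Context: A tNCW is $\mathcal{A}=\langle\Sigma,Q,q_0,\delta,\alpha\rangle$: finite alphabet $\Sigma$, finite state set $Q$, initial state $q_0$, transition function $\delta:Q\times\Sigma\to 2^Q\setminus\{\emptyset\}$ with transition relation $\Delta=\{\langle q,\sigma,s\rangle:s\in\delta(q,\sigma)\}$, and $\alpha\subseteq\Delta$; its size is $|Q|$. $\alpha$-transitions are those in $\alpha$, $\bar\alpha$-transitions those in $\Delta\setminus\alpha$; $\delta^{\bar\alpha}(q,\sigma)$ denotes the $\sigma$-successors via $\bar\alpha$-transitions. A run on $w=\sigma_1\sigma_2\cdots$ is $r_0r_1\cdots$ with $r_0=q_0$, $r_{i+1}\in\delta(r_i,\sigma_{i+1})$; accepting iff it traverses $\alpha$-transitions only finitely often; $L(\mathcal{A})$ the accepted language. A tDCW is a tNCW with $|\delta(q,\sigma)|=1$ for all $q,\sigma$. $\mathcal{A}^q$ is $\mathcal{A}$ with initial state $q$; $q\sim s$ iff $L(\mathcal{A}^q)=L(\mathcal{A}^s)$. $\mathcal{A}$ is GFG if there is $f:\Sigma^*\to Q$ with $f(\epsilon)=q_0$, $\langle f(u),\sigma,f(u\sigma)\rangle\in\Delta$ for all $u,\sigma$, and for every $w\in L(\mathcal{A})$ the run $f(w[1,0]),f(w[1,1]),\dots$ accepting; $q$ is GFG if $\mathcal{A}^q$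 is. Nice: all states reachable and GFG, semantically deterministic (all $\sigma$-successors of a state pairwise $\sim$), safe deterministic ($|\delta^{\bar\alpha}(q,\sigma)|\le1$), and normal (a path of $\bar\alpha$-transitions from $q$ to $s$ implies one from $s$ to $q$). An $\omega$-regular language $L$ is tDCW-positive if the minimal number of states of a tDCW recognizing $L$ is not larger than the minimal number of states of a GFG-tNCW recognizing $L$. Two tNCWs $\mathcal{A},\mathcal{B}$ are safe isomorphic if there is a bijection $\kappa:Q_\mathcal{A}\to Q_\mathcal{B}$ such that for all $q,q'\in Q_\mathcal{A}$ and $\sigma\in\Sigma$: $q'\in\delta^{\bar\alpha}_\mathcal{A}(q,\sigma)$ iff $\kappa(q')\in\delta^{\bar\alpha}_\mathcal{B}(\kappa(q),\sigma)$. *)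

From Stdlib Require Import Relations.
From mathcomp Require Import all_boot.

Set Implicit Arguments. Unset Strict Implicit. Unset Printing Implicit Defensive.

(* Infinite words over Sigma: w = sigma_1 sigma_2 ... is represented by
   w : nat -> Sigma with w i = sigma_{i+1}. *)
Definition word (Sigma : Type) := nat -> Sigma.
Definition language (Sigma : Type) := word Sigma -> Prop.

Definition prefix (Sigma : Type) (w : word Sigma) (i : nat) : seq Sigma :=
  [seq w k | k <- iota 0 i].

(* alpha is a predicate on triples; the alpha-transitions are the triples in
   Delta that satisfy alpha (so alpha is effectively a subset of Delta). *)
Record tNCW (Sigma Q : finType) := TNCW {
  init : Q;
  delta : Q -> Sigma -> {set Q};
  delta_ne : forall q a, delta q a != set0;
  alpha : Q -> Sigma -> Q -> bool
}.

Section Aut.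
Variables (Sigma Q : finType) (A : tNCW Sigma Q).

Definition in_Delta (q : Q) (a : Sigma) (s : Q) : bool := s \in delta A q a.
Definition alpha_trans (q : Q) (a : Sigma) (s : Q) : bool :=
  in_Delta q a s && alpha A q a s.
Definition nalpha_trans (q : Q) (a : Sigma) (s : Q) : bool :=
  in_Delta q a s && ~~ alpha A q a s.

Definition with_init (q : Q) : tNCW Sigma Q :=
  @TNCW Sigma Q q (delta A) (@delta_ne _ _ A) (alpha A).

Definition is_run (w : word Sigma) (r : nat -> Q) : Prop :=
  r 0 = init A /\ forall i, in_Delta (r i) (w i) (r i.+1).

Definition run_accepting (w : word Sigma) (r : nat -> Q) : Prop :=
  exists N, forall i, N <= i -> ~~ alpha A (r i) (w i) (r i.+1).

Definition accepts (w : word Sigma) : Prop :=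
  exists r, is_run w r /\ run_accepting w r.

Definition recognizes (L : language Sigma) : Prop :=
  forall w, L w <-> accepts w.

Definition is_tDCW : Prop := forall q a, #|delta A q a| = 1.

Definition is_GFG : Prop :=
  exists f : seq Sigma -> Q,
    f [::] = init A /\
    (forall u a, in_Delta (f u) a (f (rcons u a))) /\
    (forall w, accepts w -> run_accepting w (fun i => f (prefix w i))).

Definition step (q s : Q) : Prop := exists a, in_Delta q a s.
Definition nalpha_step (q s : Q) : Prop := exists a, nalpha_trans q a s.

Definition reachable (q : Q) : Prop := clos_refl_trans Q step (init A) q.

End Aut.

Definition equiv_states (Sigma Q : finType) (A : tNCW Sigma Q) (q s : Q) : Prop :=
  forall w, accepts (with_init A q) w <-> accepts (with_init A s) w.

Section Aut2.
Variables (Sigma Q : finType) (A : tNCW Sigma Q).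

Definition semantically_deterministic : Prop :=
  forall q a s s', in_Delta A q a s -> in_Delta A q a s' -> equiv_states A s s'.

Definition safe_deterministic : Prop :=
  forall q a s s', nalpha_trans A q a s -> nalpha_trans A q a s' -> s = s'.

Definition normal : Prop :=
  forall q s, clos_refl_trans Q (nalpha_step A) q s ->
              clos_refl_trans Q (nalpha_step A) s q.

Definition nice : Prop :=
  (forall q, reachable A q) /\
  (forall q, is_GFG (with_init A q)) /\
  semantically_deterministic /\ safe_deterministic /\ normal.

End Aut2.

Record NBW (Sigma Q : finType) := MkNBW {
  binit : Q;
  bdelta : Q -> Sigma -> {set Q};
  bacc : {set Q}
}.

Definition nbw_accepts (Sigma Q : finType) (B : NBW Sigma Q) (w : word Sigma) : Prop :=
  exists r : nat -> Q, r 0 = binit B /\ (forall i, r i.+1 \in bdelta B (r i) (w i)) /\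
    (forall N, exists i, N <= i /\ r i \in bacc B).

Definition omega_regular (Sigma : finType) (L : language Sigma) : Prop :=
  exists (Q : finType) (B : NBW Sigma Q), forall w, L w <-> nbw_accepts B w.

(* min #states of a tDCW for L <= min #states of a GFG-tNCW for L:
   every GFG-tNCW for L is matched by a tDCW for L that is no larger. *)
Definition tDCW_positive (Sigma : finType) (L : language Sigma) : Prop :=
  forall (Q : finType) (B : tNCW Sigma Q), is_GFG B -> recognizes B L ->
    exists (Q' : finType) (D : tNCW Sigma Q'),
      is_tDCW D /\ recognizes D L /\ #|Q'| <= #|Q|.

Definition minimal_tDCW (Sigma Q : finType) (A : tNCW Sigma Q) (L : language Sigma) : Prop :=
  forall (Q' : finType) (D : tNCW Sigma Q'), is_tDCW D -> recognizes D L -> #|Q| <= #|Q'|.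

Definition safe_isomorphic (Sigma Q1 Q2 : finType)
    (A : tNCW Sigma Q1) (B : tNCW Sigma Q2) : Prop :=
  exists kappa : Q1 -> Q2, bijective kappa /\
    forall (q q' : Q1) (a : Sigma),
      nalpha_trans A q a q' <-> nalpha_trans B (kappa q) a (kappa q').

From Stdlib Require Import Relations.
From mathcomp Require Import all_boot boolp.

Set Implicit Arguments. Unset Strict Implicit. Unset Printing Implicit Defensive.

(* For a state q of a deterministic automaton, let safe(q) be the set of finite
   words read from q along non-alpha transitions. In a minimal tDCW A for a
   tDCW-positive language, no nonempty set S of states can be redirected by a
   map rho into equivalent states outside S with safe(p) included in
   safe(rho p): dropping S and letting transitions move nondeterministically to
   equivalent states would give a GFG-tNCW for L with fewer states. Hence a
   state is determined by its language and its safe language and, by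
   normality, q ~ q' together with safe(q) included in safe(q') forces a safe
   path from q' back to q.
   Given two nice minimal tDCWs, a pumping argument maps every state to an
   equivalent state of the other automaton with a larger safe language.
   Going back and forth until a state repeats produces, for each state of A1,
   a state of A2 with the same language and safe language; this map is the
   safe isomorphism. *)

Section Words.
Variable Sigma : Type.
Implicit Types (w : word Sigma) (u : seq Sigma).

Definition wshift w m : word Sigma := fun i => w (m + i).

Definition wcat u w : word Sigma :=
  fun n => if n < size u then nth (w 0) u n else w (n - size u).

Definition wloop (x : Sigma) (y : seq Sigma) : word Sigma :=
  fun n => nth x (x :: y) (n %% (size y).+1).

Lemma prefixS w n : prefix w n.+1 = rcons (prefix w n) (w n).
Proof. by rewrite /prefix -addn1 iotaD map_cat cats1. Qed.

Lemma prefixD w m n : prefix w (m + n) = prefix w m ++ prefix (wshift w m) n.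
Proof.
by rewrite /prefix iotaD map_cat add0n -{2}(addn0 m) iotaDl -map_comp.
Qed.

Lemma prefix_take w m n : n <= m -> prefix w n = take n (prefix w m).
Proof. by move=> le_nm; rewrite /prefix -map_take take_iota (minn_idPl le_nm). Qed.

Lemma wshiftD w m n : wshift (wshift w m) n = wshift w (m + n).
Proof. by apply: funext => i; rewrite /wshift addnA. Qed.

Lemma prefix_wshiftS w m n : prefix (wshift w m) n.+1 = w m :: prefix (wshift w m.+1) n.
Proof. by rewrite -add1n prefixD wshiftD addn1 /prefix /wshift /= addn0. Qed.

Lemma prefix_wcat u w : prefix (wcat u w) (size u) = u.
Proof.
rewrite /prefix -[RHS](mkseq_nth (w 0)); apply/eq_in_map => k.
by rewrite mem_iota /wcat => /andP [_ ->].
Qed.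

Lemma wshift_wcat u w : wshift (wcat u w) (size u) = w.
Proof. by apply: funext => i; rewrite /wshift /wcat ltnNge leq_addr addKn. Qed.

Lemma wshift_wloop x y k : wshift (wloop x y) (k * (size y).+1) = wloop x y.
Proof. by apply: funext => i; rewrite /wshift /wloop modnMDl. Qed.

Lemma prefix_wloop x y : prefix (wloop x y) (size y).+1 = x :: y.
Proof.
rewrite /prefix -[RHS](mkseq_nth x); apply/eq_in_map => k.
by rewrite mem_iota /wloop => /andP [_ lt_k]; rewrite modn_small.
Qed.

End Words.

Section Deterministic.
Variables (Sigma Q : finType) (A : tNCW Sigma Q).
Implicit Types (q : Q) (a : Sigma) (u v : seq Sigma) (w : word Sigma).

Definition next_state q a := odflt q [pick s in delta A q a].

Definition state_after q u := foldl next_state q u.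

Fixpoint safe_from q u :=
  if u is a :: u' then ~~ alpha A q a (next_state q a) && safe_from (next_state q a) u'
  else true.

Lemma state_after_cat q u v : state_after q (u ++ v) = state_after (state_after q u) v.
Proof. exact: foldl_cat. Qed.

Lemma state_after_rcons q u a : state_after q (rcons u a) = next_state (state_after q u) a.
Proof. exact: foldl_rcons. Qed.

Lemma safe_from_cat q u v :
  safe_from q (u ++ v) = safe_from q u && safe_from (state_after q u) v.
Proof. by elim: u q => [|a u IH] q //=; rewrite IH andbA. Qed.

Lemma safe_from_rcons q u a : safe_from q (rcons u a) =
  safe_from q u && ~~ alpha A (state_after q u) a (state_after q (rcons u a)).
Proof. by rewrite -cats1 safe_from_cat /= andbT state_after_cat. Qed.

Lemma safe_from_catl q u v : safe_from q (u ++ v) -> safe_from q u.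
Proof. by rewrite safe_from_cat => /andP []. Qed.

Lemma safe_from_take q u n : safe_from q u -> safe_from q (take n u).
Proof. by rewrite -{1}(cat_take_drop n u); apply: safe_from_catl. Qed.

Lemma safe_from_prefixP q w n :
  reflect (forall i, i < n -> ~~ alpha A (state_after q (prefix w i)) (w i)
                                         (state_after q (prefix w i.+1)))
          (safe_from q (prefix w n)).
Proof.
elim: n => [|n IH]; first by constructor.
rewrite prefixS safe_from_rcons -prefixS.
apply: (iffP andP) => [[/IH safe_n alpha_n] i|safe_i].
  by rewrite ltnS leq_eqVlt => /orP [/eqP -> //|]; apply: safe_n.
by split; [apply/IH => i lt_in; apply: safe_i; apply: ltnW | apply: safe_i].
Qed.

Hypothesis detA : is_tDCW A.

Lemma mem_delta q a s : (s \in delta A q a) = (s == next_state q a).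
Proof.
have /cards1P [s0 delta_qa] : #|delta A q a| == 1 by rewrite detA.
rewrite /next_state; case: pickP => [s1|/(_ s0)]; rewrite delta_qa !in_set1 ?eqxx //.
by move=> /eqP ->.
Qed.

Lemma next_state_in q a : in_Delta A q a (next_state q a).
Proof. by rewrite /in_Delta mem_delta. Qed.

Lemma acceptsE q w : accepts (with_init A q) w <-> exists N, forall i, N <= i ->
  ~~ alpha A (state_after q (prefix w i)) (w i) (state_after q (prefix w i.+1)).
Proof.
split=> [[r [[r0 rS] [N accN]]]|[N accN]].
  have r_det i : r i = state_after q (prefix w i).
    elim: i => [//|i IH]; apply/eqP.
    by rewrite prefixS state_after_rcons -IH -mem_delta; apply: rS.
  by exists N => i le_Ni; rewrite -!r_det; apply: accN.
exists (fun i => state_after q (prefix w i)); split; last by exists N.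
by split=> // i; rewrite prefixS state_after_rcons; apply: next_state_in.
Qed.

Lemma accepts_shift q w m : accepts (with_init A q) w <->
  accepts (with_init A (state_after q (prefix w m))) (wshift w m).
Proof.
rewrite !acceptsE; split=> [[N accN]|[N accN]].
  exists N => i le_Ni; rewrite -!state_after_cat -!prefixD addnS.
  by apply: accN; apply: leq_trans le_Ni (leq_addl _ _).
exists (m + N) => i le_i.
have -> : i = m + (i - m) by rewrite subnKC // (leq_trans (leq_addr _ _) le_i).
rewrite -addnS !prefixD !state_after_cat; apply: accN.
by rewrite leq_subRL // (leq_trans (leq_addr _ _) le_i).
Qed.

Lemma accepts_cat q u w : accepts (with_init A q) (wcat u w) <->
  accepts (with_init A (state_after q u)) w.
Proof. by rewrite (accepts_shift q _ (size u)) prefix_wcat wshift_wcat. Qed.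

Lemma accepts_of_safe q w : (forall n, safe_from q (prefix w n)) ->
  accepts (with_init A q) w.
Proof.
move=> safe_w; apply/acceptsE; exists 0 => i _.
by move/safe_from_prefixP: (safe_w i.+1); apply.
Qed.

Lemma state_after_wloop q x y : state_after q (x :: y) = q ->
  forall k, state_after q (prefix (wloop x y) (k * (size y).+1)) = q.
Proof.
move=> loop_xy; elim=> [//|k IH].
by rewrite mulSnr prefixD state_after_cat IH wshift_wloop prefix_wloop.
Qed.

Lemma accepts_wloop q x y : state_after q (x :: y) = q -> safe_from q (x :: y) ->
  accepts (with_init A q) (wloop x y).
Proof.
move=> loop_xy safe_xy; apply: accepts_of_safe => n.
have safe_k k : safe_from q (prefix (wloop x y) (k * (size y).+1)).
  elim: k => [//|k IH].
  by rewrite mulSnr prefixD safe_from_cat IH state_after_wloop // wshift_wloop prefix_wloop.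
by rewrite (prefix_take _ (leq_pmulr n (ltn0Sn (size y)))); apply: safe_from_take.
Qed.

Lemma wloop_rejected q x y : state_after q (x :: y) = q -> ~~ safe_from q (x :: y) ->
  ~ accepts (with_init A q) (wloop x y).
Proof.
move=> loop_xy /negP unsafe_xy /acceptsE [N accN]; apply: unsafe_xy.
rewrite -(prefix_wloop x y) -(wshift_wloop x y N) -{1}(state_after_wloop loop_xy N).
apply/safe_from_prefixP => i _; rewrite -!state_after_cat -!prefixD addnS.
by apply: accN; rewrite (leq_trans (leq_pmulr N (ltn0Sn _)) (leq_addr _ _)).
Qed.

End Deterministic.

Section StateRelations.
Variable Sigma : finType.
Implicit Types (u : seq Sigma).

Definition lang_eq (Q1 Q2 : finType) (A : tNCW Sigma Q1) q (B : tNCW Sigma Q2) s :=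
  forall w, accepts (with_init A q) w <-> accepts (with_init B s) w.

Definition safe_incl (Q1 Q2 : finType) (A : tNCW Sigma Q1) q (B : tNCW Sigma Q2) s :=
  forall u, safe_from A q u -> safe_from B s u.

Definition safe_equiv (Q1 Q2 : finType) (A : tNCW Sigma Q1) q (B : tNCW Sigma Q2) s :=
  [/\ lang_eq A q B s, safe_incl A q B s & safe_incl B s A q].

Section Laws.
Variables (Q1 Q2 Q3 : finType) (A : tNCW Sigma Q1) (B : tNCW Sigma Q2) (C : tNCW Sigma Q3).
Implicit Types (q : Q1) (s : Q2) (t : Q3).

Lemma lang_eq_sym q s : lang_eq A q B s -> lang_eq B s A q.
Proof. by move=> eq_qs w; rewrite eq_qs. Qed.

Lemma lang_eq_trans q s t : lang_eq A q B s -> lang_eq B s C t -> lang_eq A q C t.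
Proof. by move=> eq_qs eq_st w; rewrite eq_qs eq_st. Qed.

Lemma safe_incl_trans q s t : safe_incl A q B s -> safe_incl B s C t -> safe_incl A q C t.
Proof. by move=> incl_qs incl_st u /incl_qs /incl_st. Qed.

Lemma lang_eq_init L : recognizes A L -> recognizes B L -> lang_eq A (init A) B (init B).
Proof. by move=> recA recB w; rewrite -[accepts _ w]/(accepts A w) -recA recB. Qed.

Lemma safe_incl_after q s u : safe_incl A q B s -> safe_from A q u ->
  safe_incl A (state_after A q u) B (state_after B s u).
Proof.
move=> incl_qs safe_u v safe_v.
have := incl_qs (u ++ v); rewrite !safe_from_cat safe_u safe_v.
by move=> /(_ isT) /andP [].
Qed.

Hypotheses (detA : is_tDCW A) (detB : is_tDCW B).

Lemma lang_eq_after q s u : lang_eq A q B s ->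
  lang_eq A (state_after A q u) B (state_after B s u).
Proof. by move=> eq_qs w; rewrite -(accepts_cat detA) -(accepts_cat detB). Qed.

End Laws.

Lemma safe_equiv_sym (Q1 Q2 : finType) (A : tNCW Sigma Q1) q (B : tNCW Sigma Q2) s :
  safe_equiv A q B s -> safe_equiv B s A q.
Proof. by case=> /lang_eq_sym. Qed.

Lemma safe_equiv_trans (Q1 Q2 Q3 : finType) (A : tNCW Sigma Q1) q
    (B : tNCW Sigma Q2) s (C : tNCW Sigma Q3) t :
  safe_equiv A q B s -> safe_equiv B s C t -> safe_equiv A q C t.
Proof.
case=> eq_qs incl_qs incl_sq [eq_st incl_st incl_ts]; split.
- exact: lang_eq_trans eq_st.
- exact: safe_incl_trans incl_st.
- exact: safe_incl_trans incl_ts incl_sq.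
Qed.

Lemma safe_equiv_after (Q1 Q2 : finType) (A : tNCW Sigma Q1) q (B : tNCW Sigma Q2) s u :
  is_tDCW A -> is_tDCW B -> safe_equiv A q B s -> safe_from A q u ->
  safe_equiv A (state_after A q u) B (state_after B s u).
Proof.
move=> detA detB [eq_qs incl_qs incl_sq] safe_u; split.
- exact: lang_eq_after.
- exact: safe_incl_after.
- by apply: safe_incl_after => //; apply: incl_qs.
Qed.

End StateRelations.

Notation safe_reach A := (clos_refl_trans _ (nalpha_step A)).

Section SafeReach.
Variables (Sigma Q : finType) (A : tNCW Sigma Q).
Hypothesis detA : is_tDCW A.
Implicit Types (p q : Q) (a : Sigma).

Lemma nalpha_transE q a q' :
  nalpha_trans A q a q' = (q' == next_state A q a) && safe_from A q [:: a].
Proof.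
rewrite /nalpha_trans /in_Delta (mem_delta detA) /= andbT.
by case: eqP => // ->.
Qed.

Lemma safe_reachP p p' :
  safe_reach A p p' <-> exists u, safe_from A p u /\ state_after A p u = p'.
Proof.
split=> [reach_pp'|[u [safe_u <-]]].
  elim: (clos_rt_rtn1 _ _ _ _ reach_pp') => [|q q' [a]]; first by exists [::].
  rewrite nalpha_transE => /andP [/eqP -> /andP [safe_a _]] _ [u [safe_u st_u]].
  by exists (rcons u a); rewrite safe_from_rcons state_after_rcons safe_u st_u.
elim: u p safe_u => [|a u IH] p /=; first by move=> _; apply: rt_refl.
move=> /andP [safe_a /IH]; apply: rt_trans; apply: rt_step; exists a.
by rewrite nalpha_transE eqxx /= andbT.
Qed.

Lemma reachableP q : reachable A q -> exists u, state_after A (init A) u = q.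
Proof.
move=> reach_q; elim: (clos_rt_rtn1 _ _ _ _ reach_q) => [|p p' [a]]; first by exists [::].
rewrite /in_Delta (mem_delta detA) => /eqP -> _ [u <-].
by exists (rcons u a); rewrite state_after_rcons.
Qed.

End SafeReach.

Section Redirect.
Variables (Sigma Q : finType) (L : language Sigma) (A : tNCW Sigma Q).
Hypotheses (detA : is_tDCW A) (recA : recognizes A L).
Hypotheses (minA : minimal_tDCW A L) (posL : tDCW_positive L).
Variables (S : pred Q) (rho : Q -> Q).
Hypotheses (rho_notin : forall p, ~~ S (rho p))
  (rho_lang : forall p, lang_eq A (rho p) A p)
  (rho_safe : forall p, safe_incl A p A (rho p))
  (rho_safe_step : forall c a, ~~ S c -> safe_from A c [:: a] ->
     safe_incl A (rho (next_state A c a)) A (next_state A c a)).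

Local Notation next := (next_state A).
Local Notation after := (state_after A (init A)).

Definition kept : finType := {p : Q | ~~ S p}.

Definition rho_kept p : kept := exist _ (rho p) (rho_notin p).

Definition redirect_delta (c : kept) a : {set kept} :=
  [set t : kept | `[< lang_eq A (val t) A (next (val c) a) >]].

Lemma redirect_delta_neq0 c a : redirect_delta c a != set0.
Proof.
by apply/set0Pn; exists (rho_kept (next (val c) a)); rewrite inE; apply/asboolP/rho_lang.
Qed.

Definition redirect_alpha (c : kept) a (t : kept) :=
  ~~ ((val t == rho (next (val c) a)) && safe_from A (val c) [:: a]).

Definition redirected :=
  @TNCW Sigma kept (rho_kept (init A)) redirect_delta redirect_delta_neq0 redirect_alpha.

Lemma redirected_sound w : accepts redirected w -> accepts A w.
Proof.
case=> r [[r0 r_step] [N accN]].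
have r_lang i : lang_eq A (val (r i)) A (after (prefix w i)).
  elim: i => [|i IH]; first by rewrite r0; apply: rho_lang.
  move: (r_step i); rewrite /in_Delta inE => /asboolP eq_next.
  apply: lang_eq_trans eq_next _; rewrite prefixS state_after_rcons.
  exact: (lang_eq_after detA detA [:: w i] IH).
have r_next i : N <= i ->
    val (r i.+1) = rho (next (val (r i)) (w i)) /\ safe_from A (val (r i)) [:: w i].
  by move=> /accN; rewrite negbK => /andP [/eqP].
have safe_suffix n i : N <= i -> safe_from A (val (r i)) (prefix (wshift w i) n).
  elim: n i => [//|n IH] i le_Ni.
  have [r_i1 safe_i] := r_next i le_Ni.
  rewrite prefix_wshiftS -cat1s safe_from_cat safe_i /=.
  apply: (rho_safe_step (valP (r i)) safe_i); rewrite -r_i1.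
  exact: IH (leqW le_Ni).
have acc_N : accepts (with_init A (val (r N))) (wshift w N).
  by apply: (accepts_of_safe detA) => n; apply: safe_suffix.
change (accepts (with_init A (init A)) w).
by apply/(accepts_shift detA _ _ N); apply/(r_lang N).
Qed.

(* Resetting to rho of the state of A after each rejecting transition of A is
   what lets the run of [redirected] become safe once the run of A does. *)
Definition strategy_step (qc : Q * kept) a : Q * kept :=
  (next qc.1 a, if alpha A qc.1 a (next qc.1 a) then rho_kept (next qc.1 a)
                else rho_kept (next (val qc.2) a)).

Definition strategy u := (foldl strategy_step (init A, rho_kept (init A)) u).2.

Lemma strategy_rcons u a : strategy (rcons u a) =
  if alpha A (after u) a (next (after u) a) then rho_kept (next (after u) a)
  else rho_kept (next (val (strategy u)) a).
Proof.
have state u' : foldl strategy_step (init A, rho_kept (init A)) u' = (after u', strategy u').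
  elim/last_ind: u' => [//|u' b IH].
  by rewrite foldl_rcons state_after_rcons IH /strategy foldl_rcons IH.
by rewrite /strategy foldl_rcons state.
Qed.

Lemma strategy_lang u : lang_eq A (val (strategy u)) A (after u).
Proof.
elim/last_ind: u => [|u a IH]; first exact: rho_lang.
rewrite strategy_rcons state_after_rcons; case: ifP => _; first exact: rho_lang.
exact: lang_eq_trans (rho_lang _) (lang_eq_after detA detA [:: a] IH).
Qed.

Lemma strategy_safe u : safe_incl A (after u) A (val (strategy u)).
Proof.
elim/last_ind: u => [|u a IH]; first exact: rho_safe.
rewrite strategy_rcons state_after_rcons; case: ifP => [_|nalpha] /=; first exact: rho_safe.
apply: safe_incl_trans _ (@rho_safe _).
by apply: (safe_incl_after (u := [:: a]) IH); rewrite /= nalpha.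
Qed.

Lemma strategy_in_delta u a : in_Delta redirected (strategy u) a (strategy (rcons u a)).
Proof.
rewrite /in_Delta inE strategy_rcons; apply/asboolP; case: ifP => _ /=; last exact: rho_lang.
apply: lang_eq_trans (rho_lang _) _.
exact: lang_eq_sym (lang_eq_after detA detA [:: a] (strategy_lang u)).
Qed.

Lemma strategy_accepting w :
  accepts A w -> run_accepting redirected w (fun i => strategy (prefix w i)).
Proof.
move=> /(acceptsE detA) [N accN]; exists N => i /accN.
rewrite prefixS state_after_rcons => nalpha_i.
rewrite strategy_rcons (negbTE nalpha_i) /= /redirect_alpha /= eqxx negbK.
by apply: (@strategy_safe _ [:: w i]); rewrite /= nalpha_i.
Qed.

Lemma redirected_GFG : is_GFG redirected.
Proof.
exists strategy; split=> //; split; first exact: strategy_in_delta.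
by move=> w /redirected_sound; apply: strategy_accepting.
Qed.

Lemma redirected_recognizes : recognizes redirected L.
Proof.
move=> w; split=> [/recA acc_w|/redirected_sound /recA //].
exists (fun i => strategy (prefix w i)); split; last exact: strategy_accepting.
by split=> // i; rewrite prefixS; apply: strategy_in_delta.
Qed.

Lemma redirect_source_empty p : ~~ S p.
Proof.
apply/negP => S_p.
have [Q' [D [detD [recD card_D]]]] := posL redirected_GFG redirected_recognizes.
have lt_kept : #|kept| < #|Q|.
  rewrite card_sig -(cardC S).
  have -> : #|[pred x | ~~ S x]| = #|[predC S]| by apply: eq_card.
  by rewrite -[X in X < _]add0n ltn_add2r; apply/card_gt0P; exists p.
by rewrite ltnNge (leq_trans (minA detD recD) card_D) in lt_kept.
Qed.

End Redirect.

Lemma safe_equiv_nalpha (Sigma Q1 Q2 : finType) (A : tNCW Sigma Q1) (B : tNCW Sigma Q2)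
    q s a q' :
  is_tDCW A -> is_tDCW B -> safe_equiv A q B s -> nalpha_trans A q a q' ->
  nalpha_trans B s a (next_state B s a) /\ safe_equiv A q' B (next_state B s a).
Proof.
move=> detA detB equiv_qs; rewrite (nalpha_transE detA) => /andP [/eqP -> safe_a].
have safe_a' : safe_from B s [:: a] by case: equiv_qs => _ incl_qs _; apply: incl_qs.
rewrite (nalpha_transE detB) eqxx safe_a'; split=> //.
exact: (safe_equiv_after detA detB equiv_qs safe_a).
Qed.

Section MinimalStates.
Variables (Sigma Q : finType) (L : language Sigma) (A : tNCW Sigma Q).
Hypotheses (detA : is_tDCW A) (recA : recognizes A L).
Hypotheses (minA : minimal_tDCW A L) (posL : tDCW_positive L).

Lemma safe_equiv_eq p p' : safe_equiv A p A p' -> p = p'.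
Proof.
case=> eq_pp' incl_pp' incl_p'p; case: (eqVneq p p') => // neq_pp'.
pose rho t := if t == p' then p else t.
have rho_notin t : ~~ pred1 p' (rho t) by rewrite /rho /=; case: (eqVneq t p').
have rho_lang t : lang_eq A (rho t) A t by rewrite /rho; case: (eqVneq t p') => [->|].
have rho_safe t : safe_incl A t A (rho t).
  by rewrite /rho; case: (eqVneq t p') => [->|_ u].
have rho_safe_back t : safe_incl A (rho t) A t.
  by rewrite /rho; case: (eqVneq t p') => [->|_ u].
have := redirect_source_empty detA recA minA posL rho_notin rho_lang rho_safe
  (fun c a _ _ => rho_safe_back _) p'.
by rewrite /= eqxx.
Qed.

Hypothesis normA : normal A.

Lemma safe_incl_reach p p' : lang_eq A p A p' -> safe_incl A p A p' -> safe_reach A p' p.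
Proof.
move=> eq_pp' incl_pp'; apply: contrapT => no_reach.
pose S t := `[< safe_reach A p t >].
have word_to t : exists u, S t -> safe_from A p u /\ state_after A p u = t.
  have [/(safe_reachP detA) [u reach_u]|not_reach] := pselect (safe_reach A p t).
    by exists u.
  by exists [::] => /asboolP.
have [U U_to] := choice word_to.
pose rho t := if S t then state_after A p' (U t) else t.
have rho_notin t : ~~ S (rho t).
  rewrite /rho; case: ifP => [S_t|/negbT //]; have [safe_U _] := U_to t S_t.
  apply/asboolP => reach_rho; apply: no_reach; apply: rt_trans (normA reach_rho).
  by apply/(safe_reachP detA); exists (U t); split=> //; apply: incl_pp'.
have rho_lang t : lang_eq A (rho t) A t.
  rewrite /rho; case: ifP => [S_t|//]; have [_ {2}<-] := U_to t S_t.
  exact: (lang_eq_after detA detA (U t) (lang_eq_sym eq_pp')).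
have rho_safe t : safe_incl A t A (rho t).
  rewrite /rho; case: ifP => [S_t|_ u //]; have [safe_U {1}<-] := U_to t S_t.
  exact: safe_incl_after.
have rho_safe_step c a : ~~ S c -> safe_from A c [:: a] ->
    safe_incl A (rho (next_state A c a)) A (next_state A c a).
  move=> notS_c safe_a; rewrite /rho; case: ifP => [/asboolP reach_next|_ u //].
  case/negP: notS_c; apply/asboolP; apply: rt_trans reach_next (normA _).
  by apply: rt_step; exists a; rewrite (nalpha_transE detA) eqxx.
have /asboolPn := redirect_source_empty detA recA minA posL rho_notin rho_lang rho_safe
  rho_safe_step p.
by apply; apply: rt_refl.
Qed.

End MinimalStates.

Lemma pigeonhole_nat (T : finType) (g : nat -> T) : exists i j, i < j /\ g i = g j.
Proof.
pose h (i : 'I_#|T|.+1) := g i.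
have /injectivePn [i [j neq_ij eq_hij]] : ~~ injectiveb h.
  by apply/negP => /injectiveP /leq_card; rewrite card_ord ltnn.
case: (ltngtP i j) => [lt_ij|lt_ji|/val_inj eq_ij].
- by exists i, j.
- by exists j, i.
- by rewrite eq_ij eqxx in neq_ij.
Qed.

Section Cover.
Variables (Sigma Q1 Q2 : finType) (A : tNCW Sigma Q1) (B : tNCW Sigma Q2).
Hypotheses (detA : is_tDCW A) (detB : is_tDCW B).

Lemma unsafe_loop q s : normal A -> ~ safe_incl A q B s ->
  exists z, [/\ safe_from A q z, state_after A q z = q & ~~ safe_from B s z].
Proof.
move=> normA /existsNP [u /not_implyP [safe_u /negP unsafe_u]].
have /normA /(safe_reachP detA) [v [safe_v loop_v]] : safe_reach A q (state_after A q u).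
  by apply/(safe_reachP detA); exists u.
exists (u ++ v); rewrite safe_from_cat safe_u safe_v state_after_cat loop_v.
by split=> //; apply: contra unsafe_u => /safe_from_catl.
Qed.

Lemma escapes_lang_neq q s0 (Z : Q2 -> seq Sigma) :
  (forall s, lang_eq A q B s ->
     [/\ safe_from A q (Z s), state_after A q (Z s) = q & ~~ safe_from B s (Z s)]) ->
  ~ lang_eq A q B s0.
Proof.
move=> escZ eq_qs0.
pose s k := iter k (fun s => state_after B s (Z s)) s0.
have eq_qs k : lang_eq A q B (s k).
  elim: k => [//|k IH]; have [_ loop_Z _] := escZ _ IH.
  by rewrite -{1}loop_Z; apply: lang_eq_after.
pose chunks a n := flatten [seq Z (s k) | k <- iota a n].
have chunksB a n : state_after B (s a) (chunks a n) = s (a + n).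
  elim: n a => [|n IH] a; first by rewrite addn0.
  rewrite /chunks /= state_after_cat -/(chunks _ _).
  by rewrite -[state_after B (s a) _]/(s a.+1) IH addSnnS.
have chunksA a n : state_after A q (chunks a n) = q /\ safe_from A q (chunks a n).
  elim: n a => [//|n IH] a; have [safe_Z loop_Z _] := escZ _ (eq_qs a).
  have [loop_c safe_c] := IH a.+1.
  by rewrite /chunks /= state_after_cat safe_from_cat -/(chunks _ _) loop_Z loop_c safe_Z.
have [i [j [lt_ij s_ij]]] := pigeonhole_nat s.
have unsafe_ij : ~~ safe_from B (s i) (chunks i (j - i)).
  have [_ _ unsafe_Z] := escZ _ (eq_qs i).
  by rewrite -(subnSK lt_ij) /chunks /= safe_from_cat (negbTE unsafe_Z).
have [x [y xy]] : exists x y, chunks i (j - i) = x :: y.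
  by case: (chunks i (j - i)) unsafe_ij => [//|x y]; exists x, y.
have loopB : state_after B (s i) (x :: y) = s i.
  by rewrite -xy chunksB subnKC ?s_ij // ltnW.
have [loopA safeA] := chunksA i (j - i); rewrite xy in loopA safeA unsafe_ij.
have [loop0 _] := chunksA 0 i.
have /eq_qs0 : accepts (with_init A q) (wcat (chunks 0 i) (wloop x y)).
  by apply/(accepts_cat detA); rewrite loop0; apply: accepts_wloop.
rewrite (accepts_cat detB) -[s0]/(s 0) chunksB add0n.
exact: (wloop_rejected detB loopB unsafe_ij).
Qed.

Lemma safe_cover L : (forall q, reachable A q) -> normal A ->
  recognizes A L -> recognizes B L ->
  forall q, exists s, lang_eq A q B s /\ safe_incl A q B s.
Proof.
move=> reachA normA recA recB q; apply: contrapT => no_cover.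
have escape s : exists z, lang_eq A q B s ->
    [/\ safe_from A q z, state_after A q z = q & ~~ safe_from B s z].
  have [eq_qs|not_eq] := pselect (lang_eq A q B s); last by exists [::] => /not_eq.
  have /(unsafe_loop normA) [z esc_z] : ~ safe_incl A q B s.
    by move=> incl_qs; apply: no_cover; exists s.
  by exists z.
have [Z escZ] := choice escape.
have [u st_u] := reachableP detA (reachA q).
apply: (escapes_lang_neq (s0 := state_after B (init B) u) escZ).
by rewrite -st_u; apply: lang_eq_after (lang_eq_init recA recB).
Qed.

End Cover.

Section Partner.
Variables (Sigma Q1 Q2 : finType) (L : language Sigma).
Variables (A : tNCW Sigma Q1) (B : tNCW Sigma Q2).
Hypotheses (detA : is_tDCW A) (detB : is_tDCW B) (recA : recognizes A L).
Hypotheses (minA : minimal_tDCW A L) (posL : tDCW_positive L) (normA : normal A).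
Variables (to_B : Q1 -> Q2) (to_A : Q2 -> Q1).
Hypotheses (to_B_cover : forall q, lang_eq A q B (to_B q) /\ safe_incl A q B (to_B q))
  (to_A_cover : forall s, lang_eq B s A (to_A s) /\ safe_incl B s A (to_A s)).

Lemma safe_equiv_partner q : exists s, safe_equiv A q B s.
Proof.
pose g k := iter k (to_A \o to_B) q.
have g_lang k : lang_eq A q A (g k).
  elim: k => [//|k IH].
  exact: lang_eq_trans IH (lang_eq_trans (to_B_cover _).1 (to_A_cover _).1).
have g_incl a n : safe_incl A (g a) A (g (a + n)).
  elim: n => [|n IH]; first by rewrite addn0 => u.
  rewrite addnS; apply: safe_incl_trans IH _.
  exact: safe_incl_trans (to_B_cover _).2 (to_A_cover _).2.
have [i [j [lt_ij g_ij]]] := pigeonhole_nat g.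
have incl_back : safe_incl B (to_B (g i)) A (g i).
  apply: safe_incl_trans (to_A_cover _).2 _.
  by rewrite [X in safe_incl _ _ _ X]g_ij -(subnKC lt_ij); exact: (g_incl i.+1).
have /(safe_reachP detA) [v [safe_v <-]] := safe_incl_reach detA recA minA posL normA
  (g_lang i) (g_incl 0 i).
exists (state_after B (to_B (g i)) v); apply: (safe_equiv_after detA detB _ safe_v).
by have [eq_gi incl_gi] := to_B_cover (g i); split.
Qed.

End Partner.

Theorem mainTheorem13 (Sigma : finType) (L : language Sigma)
  (hreg : omega_regular L) (hpos : tDCW_positive L)
  (Q1 Q2 : finType) (A1 : tNCW Sigma Q1) (A2 : tNCW Sigma Q2) :
  is_tDCW A1 -> is_tDCW A2 ->
  nice A1 -> nice A2 ->
  recognizes A1 L -> recognizes A2 L ->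
  minimal_tDCW A1 L -> minimal_tDCW A2 L ->
  safe_isomorphic A1 A2.
Proof.
move=> det1 det2 [reach1 [_ [_ [_ norm1]]]] [reach2 [_ [_ [_ norm2]]]] rec1 rec2 min1 min2.
have [to2 cover12] := choice (safe_cover det1 det2 reach1 norm1 rec1 rec2).
have [to1 cover21] := choice (safe_cover det2 det1 reach2 norm2 rec2 rec1).
have [kappa kappaP] :=
  choice (safe_equiv_partner det1 det2 rec1 min1 hpos norm1 cover12 cover21).
have eq1 := safe_equiv_eq det1 rec1 min1 hpos.
have eq2 := safe_equiv_eq det2 rec2 min2 hpos.
have kappa_inj : injective kappa.
  move=> q q' kappa_qq'; apply: eq1; apply: safe_equiv_trans (kappaP q) _.
  by rewrite kappa_qq'; apply: safe_equiv_sym.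
exists kappa; split; first exact: inj_card_bij kappa_inj (min2 _ _ det1 rec1).
move=> q q' a; split=> [trans_q|trans_kq].
- have [trans_k equiv_next] := safe_equiv_nalpha det1 det2 (kappaP q) trans_q.
  suff -> : kappa q' = next_state A2 (kappa q) a by [].
  by apply: eq2; apply: safe_equiv_trans (safe_equiv_sym (kappaP q')) equiv_next.
- have [trans_q equiv_next] :=
    safe_equiv_nalpha det2 det1 (safe_equiv_sym (kappaP q)) trans_kq.
  suff -> : q' = next_state A1 q a by [].
  by apply: eq1; apply: safe_equiv_trans (kappaP q') equiv_next.
Qed.
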